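(* Let $\mathcal{H}$ be a finite-dimensional Hilbert space, let $U_0$ be a unitary operator on $\mathcal{H}$, let $\{p_\omega\}_{\omega\in\Omega}$ be a probability distribution on a finite index set $\Omega$, and for each $\omega\in\Omega$ let $U_\omega$ be a unitary operator on $\mathcal{H}$. Let $\ket{\psi_0}\in\mathcal{H}$ be a unit vector and let $\rho_0$ be a density operator on $\mathcal{H}$. Define $$\rho=\sum_{\omega\in\Omega}p_\omega U_\omega\rho_0U_\omega^\dagger,\qquad \sigma=U_0\ket{\psi_0}\bra{\psi_0}U_0^\dagger .$$ Then $$D(\rho,\sigma)\le D(\rho_0,\ket{\psi_0}\bra{\psi_0})+2\Big\|\sum_{\omega}p_\omega U_\omega-U_0\Big\|+\sum_{\omega}p_\omega\|U_\omega-U_0\|^2,$$ i.e. $D(\rho,\sigma)\le D(\rho_0,\ket{\psi_0}\bra{\psi_0})+2\|E(U_\omega)-U_0\|+E(\|U_\omega-U_0\|^2)$, where $E$ denotes expectation with respect to $\{p_\omega\}$.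
   Context: $D(A,B)={\rm Tr}|A-B|$ denotes the trace distance between operators $A,B$ (with $|X|=\sqrt{X^\dagger X}$), and $\|\cdot\|$ denotes the operator norm. *)

From HB Require Import structures.
From mathcomp Require Import all_boot all_order all_algebra.
From mathcomp Require Import complex.
From mathcomp Require Import boolp classical_sets reals.
Set Implicit Arguments. Unset Strict Implicit. Unset Printing Implicit Defensive.
Import Order.TTheory GRing.Theory Num.Theory.
Local Open Scope ring_scope.
Local Open Scope complex_scope.

Section QDefs.
Variable R : realType.
Local Notation C := R[i].

Definition adj (m k : nat) (A : 'M[C]_(m, k)) : 'M[C]_(k, m) :=
  (map_mx (@conjc R) A)^T.

Definition unitary (n : nat) (U : 'M[C]_n) : Prop :=
  U *m adj U = 1%:M /\ adj U *m U = 1%:M.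

Definition psd (n : nat) (S : 'M[C]_n) : Prop :=
  adj S = S /\ forall v : 'cV[C]_n, 0 <= (adj v *m S *m v) 0 0.

Definition density (n : nat) (rho : 'M[C]_n) : Prop :=
  psd rho /\ \tr rho = 1.

Definition msqrt (n : nat) (A : 'M[C]_n) : 'M[C]_n :=
  xget 0 [set S | psd S /\ S *m S = A].

Definition mabs (n : nat) (X : 'M[C]_n) : 'M[C]_n := msqrt (adj X *m X).

Definition trdist (n : nat) (A B : 'M[C]_n) : R := complex.Re (\tr (mabs (A - B))).

Definition vnorm (n : nat) (v : 'cV[C]_n) : R :=
  Num.sqrt (\sum_i (Normc.normc (v i 0)) ^+ 2).

Definition opnorm (n : nat) (A : 'M[C]_n) : R :=
  sup [set vnorm (A *m v) | v in [set v : 'cV[C]_n | vnorm v = 1]].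

End QDefs.

From HB Require Import structures.
From mathcomp Require Import all_boot all_order all_algebra.
From mathcomp Require Import complex.
From mathcomp Require Import boolp classical_sets reals.
From mathcomp Require Import sesquilinear spectral.
From mathcomp Require Import ring.
Import Order.TTheory GRing.Theory Num.Theory.
Local Open Scope ring_scope.
Local Open Scope complex_scope.
Local Open Scope sesquilinear_scope.

Set Implicit Arguments.
Unset Strict Implicit.
Unset Printing Implicit Defensive.

Local Notation Re := complex.Re.

(* For Hermitian X, every unitary W gives Re tr (W X) <= Tr |X|, and some unitary J
   (the phase of X) attains equality.  Both facts are proved for an arbitrary positive
   square root S of X^dagger X after diagonalising S, so it does not matter which root
   [mabs] picks.  Take J attaining D(rho, sigma) and split
   U_w rho0 U_w^dagger = U_w (rho0 - P) U_w^dagger + U_w P U_w^dagger, P = |psi0><psi0|.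
   The first parts contribute at most D(rho0, P).  With a = U0 psi0 and
   b_w = (U_w - U0) psi0, the pure parts contribute
   sum_w p_w <a + b_w, J (a + b_w)> - <a, J a>
     = <E b, J a> + <a, J E b> + sum_w p_w <b_w, J b_w>,
   where E b = (E U - U0) psi0; Cauchy-Schwarz bounds this by
   2 ||E U - U0|| + E ||U_w - U0||^2. *)

Section Adjoint.
Variable R : realType.
Local Notation C := R[i].

Lemma adjE m k (A : 'M[C]_(m, k)) i j : adj A i j = (A j i)^*.
Proof. by rewrite !mxE. Qed.

Lemma adj_mul m k l (A : 'M[C]_(m, k)) (B : 'M[C]_(k, l)) :
  adj (A *m B) = adj B *m adj A.
Proof. by rewrite /adj map_mxM trmx_mul. Qed.

Lemma adjD m k (A B : 'M[C]_(m, k)) : adj (A + B) = adj A + adj B.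
Proof. by apply/matrixP=> i j; rewrite !mxE rmorphD. Qed.

Lemma adjB m k (A B : 'M[C]_(m, k)) : adj (A - B) = adj A - adj B.
Proof. by apply/matrixP=> i j; rewrite !mxE rmorphB. Qed.

Lemma adj_realZ m k (r : R) (A : 'M[C]_(m, k)) : adj (r%:C *: A) = r%:C *: adj A.
Proof. by apply/matrixP=> i j; rewrite !mxE rmorphM; congr (_ * _); exact: conjc_real. Qed.

Lemma adj_sum m k (I : finType) (F : I -> 'M[C]_(m, k)) :
  adj (\sum_i F i) = \sum_i adj (F i).
Proof.
by apply/matrixP=> i j; rewrite !mxE !summxE rmorph_sum; apply: eq_bigr => h _; rewrite !mxE.
Qed.

Lemma adjK m k (A : 'M[C]_(m, k)) : adj (adj A) = A.
Proof. by apply/matrixP=> i j; rewrite !mxE conjcK. Qed.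

Lemma adj_tstar m k (A : 'M[C]_(m, k)) : adj A = A ^t*.
Proof. by apply/matrixP=> i j; rewrite !mxE. Qed.

Lemma unitaryP n (U : 'M[C]_n) : U *m adj U = 1%:M -> unitary U.
Proof. by move=> UU; split=> //; apply: mulmx1C. Qed.

Lemma unitary_adj n (U : 'M[C]_n) : unitary U -> unitary (adj U).
Proof. by case=> U1 U2; split; rewrite adjK. Qed.

Lemma unitary_mul n (U V : 'M[C]_n) : unitary U -> unitary V -> unitary (U *m V).
Proof.
move=> [U1 _] [V1 _]; apply: unitaryP.
by rewrite adj_mul mulmxA -(mulmxA U) V1 mulmx1 U1.
Qed.

Lemma mulmx_conj n (V W A B : 'M[C]_n) : W *m V = 1%:M ->
  V *m A *m W *m (V *m B *m W) = V *m (A *m B) *m W.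
Proof. by move=> WV; rewrite !mulmxA -(mulmxA _ W) WV mulmx1. Qed.

Lemma mxtrace_conj n (V W A : 'M[C]_n) : W *m V = 1%:M -> \tr (V *m A *m W) = \tr A.
Proof. by move=> WV; rewrite mxtrace_mulC mulmxA WV mul1mx. Qed.

End Adjoint.

Section InnerProduct.
Variable R : realType.
Local Notation C := R[i].

Definition cdot n (x y : 'cV[C]_n) : C := (adj x *m y) 0 0.

Lemma adj_mulmxE m k l (A : 'M[C]_(k, m)) (B : 'M[C]_(k, l)) i j :
  (adj A *m B) i j = cdot (col i A) (col j B).
Proof. by rewrite /cdot !mxE; apply: eq_bigr => h _; rewrite !adjE !mxE. Qed.

Lemma cdot_dotmx n (x y : 'cV[C]_n) : cdot x y = dotmx y^T x^T.
Proof. by rewrite dotmxE /cdot !mxE; apply: eq_bigr => h _; rewrite adjE !mxE mulrC. Qed.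

Lemma normcC (z : C) : (Normc.normc z)%:C = `|z|.
Proof. by case: z => a b; rewrite normc_def. Qed.

Lemma normc_sqrC (z : C) : (Normc.normc z ^+ 2)%:C = z^* * z.
Proof. by rewrite rmorphXn /= normcC sqr_normc mulrC. Qed.

Lemma vnorm_ge0 n (v : 'cV[C]_n) : 0 <= vnorm v.
Proof. exact: sqrtr_ge0. Qed.

Lemma vnorm_sqrC n (v : 'cV[C]_n) : (vnorm v ^+ 2)%:C = cdot v v.
Proof.
rewrite sqr_sqrtr ?sumr_ge0// => [|i _]; last exact: sqr_ge0.
by rewrite rmorph_sum /cdot mxE; apply: eq_bigr => i _; rewrite adjE -normc_sqrC.
Qed.

Lemma vnormC n (v : 'cV[C]_n) : (vnorm v)%:C = sqrtC (cdot v v).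
Proof. by rewrite -vnorm_sqrC rmorphXn sqrCK // ler0c vnorm_ge0. Qed.

Lemma vnorm_eq n (v : 'cV[C]_n) (r : R) :
  0 <= r -> cdot v v = (r ^+ 2)%:C -> vnorm v = r.
Proof.
move=> r0 vr; apply/eqP; rewrite -(eqrXn2 (n := 2)) ?vnorm_ge0 //.
by apply/eqP/complexI; rewrite vnorm_sqrC.
Qed.

Lemma vnorm_eq0 n (v : 'cV[C]_n) : vnorm v = 0 -> v = 0.
Proof.
move=> v0; apply: trmx_inj; rewrite trmx0; apply/eqP.
rewrite -(dnorm_eq0 (@dotmx C n)).
apply/eqP; have := cdot_dotmx v v; rewrite -vnorm_sqrC v0 expr0n; exact: esym.
Qed.

Lemma cdot_CauchySchwarz n (x y : 'cV[C]_n) :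
  `|cdot x y| <= (vnorm x * vnorm y)%:C.
Proof.
rewrite rmorphM /= !vnormC !cdot_dotmx mulrC.
exact: leif_le (CauchySchwarz_sqrt _ _ _).
Qed.

Lemma Re_le_norm (z w : C) : `|z| <= w -> Re z <= Re w.
Proof.
move=> /(le_trans (normc_ge_Re z)); rewrite lecE => /andP[_].
exact/le_trans/ler_norm.
Qed.

Lemma vnorm_unitary n (W : 'M[C]_n) (v : 'cV[C]_n) :
  adj W *m W = 1%:M -> vnorm (W *m v) = vnorm v.
Proof.
move=> WW; apply: vnorm_eq; first exact: vnorm_ge0.
by rewrite vnorm_sqrC /cdot adj_mul -mulmxA (mulmxA (adj W)) WW mul1mx.
Qed.

Lemma Re_cdot_unitary_le n (W : 'M[C]_n) (x y : 'cV[C]_n) :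
  adj W *m W = 1%:M -> Re (cdot x (W *m y)) <= vnorm x * vnorm y.
Proof.
by move=> WW; have := Re_le_norm (cdot_CauchySchwarz x (W *m y)); rewrite vnorm_unitary.
Qed.

Lemma opnorm_ub n (A : 'M[C]_n) (v : 'cV[C]_n) :
  vnorm v = 1 -> vnorm (A *m v) <= opnorm A.
Proof.
move=> v1; apply: ub_le_sup; last by exists v.
exists (Num.sqrt (\sum_i vnorm (adj (row i A)) ^+ 2)) => _ [w w1 <-].
rewrite ler_sqrt ?sumr_ge0 // => [|i _]; last exact: sqr_ge0.
apply: ler_sum => i _; rewrite lerXn2r ?nnegrE ?vnorm_ge0 -?ler0c ?normcC //.
have -> : (A *m w) i 0 = cdot (adj (row i A)) w.
  by rewrite /cdot !mxE; apply: eq_bigr => h _; rewrite adjK !mxE.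
by rewrite -lecR normcC; apply: le_trans (cdot_CauchySchwarz _ _) _; rewrite w1 mulr1.
Qed.

End InnerProduct.

Section Spectral.
Variable R : realType.
Local Notation C := R[i].

Definition realdiag n (r : 'I_n -> R) : 'M[C]_n := diag_mx (\row_i (r i)%:C).

Lemma adj_realdiag n (r : 'I_n -> R) : adj (realdiag r) = realdiag r.
Proof.
apply/matrixP=> i j; rewrite !mxE eq_sym.
by case: eqP => [->|_]; rewrite ?mulr1n ?mulr0n ?conjc_real ?conjc0.
Qed.

Lemma realdiag_mul n (r s : 'I_n -> R) :
  realdiag r *m realdiag s = realdiag (fun i => r i * s i).
Proof. by rewrite /realdiag mulmx_diag; congr diag_mx; apply/rowP=> i; rewrite !mxE rmorphM. Qed.

Lemma realdiag_add n (r s : 'I_n -> R) :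
  realdiag r + realdiag s = realdiag (fun i => r i + s i).
Proof. by apply/matrixP=> i j; rewrite !mxE -mulrnDl rmorphD. Qed.

Lemma realdiag1 n : realdiag (fun _ : 'I_n => 1) = 1%:M.
Proof. by apply/matrixP=> i j; rewrite !mxE. Qed.

Lemma mxtrace_realdiag n (r : 'I_n -> R) : \tr (realdiag r) = (\sum_i r i)%:C.
Proof. by rewrite mxtrace_diag rmorph_sum; apply: eq_bigr => i _; rewrite mxE. Qed.

Lemma psd_realdiag n (r : 'I_n -> R) : (forall i, 0 <= r i) -> psd (realdiag r).
Proof.
move=> r0; split; first exact: adj_realdiag.
move=> v; rewrite mul_mx_diag mxE sumr_ge0 // => i _; rewrite !mxE mulrAC.
by rewrite mulr_ge0 ?ler0c // mulrC mul_conjC_ge0.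
Qed.

Lemma psd_conj n (V S : 'M[C]_n) : psd S -> psd (adj V *m S *m V).
Proof.
move=> [S_herm S_ge0]; split; first by rewrite !adj_mul adjK S_herm mulmxA.
move=> v; have -> : adj v *m (adj V *m S *m V) *m v = adj (V *m v) *m S *m (V *m v).
  by rewrite adj_mul !mulmxA.
exact: S_ge0.
Qed.

Lemma hermitian_diagonalize n (B : 'M[C]_n) : adj B = B ->
  exists V d, unitary V /\ B = adj V *m diag_mx d *m V.
Proof.
move=> B_herm; have B_normal : B \is normalmx by apply/normalmxP; rewrite -adj_tstar B_herm.
have V_unitary := spectral_unitarymx B.
exists (spectralmx B), (spectral_diag B); split.
  by apply: unitaryP; rewrite adj_tstar; apply/unitarymxP.
by rewrite adj_tstar -invmx_unitary //; apply/orthomx_spectralP.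
Qed.

Lemma ge0_real (z : C) : 0 <= z -> z = (Re z)%:C /\ 0 <= Re z.
Proof. by case: z => a b; rewrite lecE /= => /andP[/eqP-> a0]. Qed.

Lemma conj_diag_entry n (A B : 'M[C]_n) i :
  (A *m B *m adj A) i i = (row i A *m B *m adj (row i A)) 0 0.
Proof.
rewrite !mxE; apply: eq_bigr => k _; rewrite !adjE !mxE; congr (_ * _).
by apply: eq_bigr => l _; rewrite !mxE.
Qed.

Lemma psd_diagonalize n (S : 'M[C]_n) : psd S ->
  exists V r, [/\ unitary V, forall i, 0 <= r i & S = adj V *m realdiag r *m V].
Proof.
move=> [S_herm S_ge0]; have [V [d [[V1 V2] SE]]] := hermitian_diagonalize S_herm.
have d_ge0 i : 0 <= d 0 i.
  have <- : (V *m S *m adj V) i i = d 0 i.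
    by rewrite SE !mulmxA V1 mul1mx -mulmxA V1 mulmx1 mxE eqxx mulr1n.
  by rewrite conj_diag_entry; have := S_ge0 (adj (row i V)); rewrite adjK.
exists V, (fun i => Re (d 0 i)); split => //.
- by move=> i; case: (ge0_real (d_ge0 i)).
- rewrite SE; congr (_ *m diag_mx _ *m _); apply/rowP => i.
  by rewrite mxE; case: (ge0_real (d_ge0 i)).
Qed.

Lemma psd_sqrt_exists n (A : 'M[C]_n) : psd A -> exists S, psd S /\ S *m S = A.
Proof.
move=> /psd_diagonalize[V [r [[V1 _] r_ge0 AE]]].
have sqrt_ge0 i : 0 <= Num.sqrt (r i) by apply: sqrtr_ge0.
exists (adj V *m realdiag (fun i => Num.sqrt (r i)) *m V); split.
  exact/psd_conj/psd_realdiag.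
rewrite (mulmx_conj _ _ V1) realdiag_mul AE; congr (_ *m realdiag _ *m _).
by apply/funext => i; rewrite -expr2 sqr_sqrtr.
Qed.

Lemma psd_adj_mul n (X : 'M[C]_n) : psd (adj X *m X).
Proof.
split; first by rewrite adj_mul adjK.
move=> v; have -> : adj v *m (adj X *m X) *m v = adj (X *m v) *m (X *m v).
  by rewrite adj_mul !mulmxA.
by rewrite -[_ 0 0]/(cdot _ _) -vnorm_sqrC ler0c sqr_ge0.
Qed.

Lemma mabs_psd_sqrt n (X : 'M[C]_n) :
  psd (mabs X) /\ mabs X *m mabs X = adj X *m X.
Proof. exact: (xgetPex 0 (psd_sqrt_exists (psd_adj_mul X))). Qed.

End Spectral.

Section TraceNorm.
Variable R : realType.
Local Notation C := R[i].

Lemma vnorm_col_diag n (Z : 'M[C]_n) (r : 'I_n -> R) i :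
  adj Z *m Z = realdiag r *m realdiag r -> 0 <= r i -> vnorm (col i Z) = r i.
Proof.
move=> ZZ r_ge0; apply: vnorm_eq => //.
by rewrite -adj_mulmxE ZZ realdiag_mul !mxE eqxx mulr1n expr2.
Qed.

Lemma norm_tr_mul_le_diag n (W Z : 'M[C]_n) (r : 'I_n -> R) :
  W *m adj W = 1%:M -> adj Z *m Z = realdiag r *m realdiag r ->
  (forall i, 0 <= r i) -> `|\tr (W *m Z)| <= (\sum_i r i)%:C.
Proof.
move=> WW ZZ r_ge0; rewrite rmorph_sum; apply: le_trans (ler_norm_sum _ _ _) _.
apply: ler_sum => i _.
have -> : (W *m Z) i i = cdot (col i (adj W)) (col i Z) by rewrite -adj_mulmxE adjK.
have W_col : vnorm (col i (adj W)) = 1.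
  by apply: vnorm_eq => //; rewrite -adj_mulmxE adjK WW mxE eqxx expr1n.
apply: le_trans (cdot_CauchySchwarz _ _) _.
by rewrite W_col (vnorm_col_diag ZZ) // mul1r.
Qed.

Lemma tr_mul_attained_diag n (Z : 'M[C]_n) (r : 'I_n -> R) :
  adj Z = Z -> Z *m Z = realdiag r *m realdiag r -> (forall i, 0 <= r i) ->
  exists J, unitary J /\ \tr (J *m Z) = (\sum_i r i)%:C.
Proof.
move=> Z_herm ZZ r_ge0; have ZadjZ : adj Z *m Z = realdiag r *m realdiag r by rewrite Z_herm.
have Z_col0 i j : r i = 0 -> Z j i = 0.
  move=> ri0; have := vnorm_col_diag ZadjZ (r_ge0 i); rewrite ri0 => /vnorm_eq0.
  by move/matrixP/(_ j 0); rewrite !mxE.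
pose e i : R := (r i == 0)%:R.
have EZ : realdiag e *m Z = 0.
  apply/matrixP => i j; rewrite mul_diag_mx !mxE /e.
  case: eqP => [ri0|_]; last by rewrite mul0r.
  by rewrite -Z_herm adjE Z_col0 // conjc0 mulr0.
have ZE : Z *m realdiag e = 0.
  apply/matrixP => i j; rewrite mul_mx_diag !mxE /e.
  by case: eqP => [rj0|_]; rewrite ?mulr0 // Z_col0 // mul0r.
(* The phase of Z: Z / r on the support of r (where [r^-1 = 0] off it) plus the
   identity on the kernel. *)
pose J := realdiag (fun i => (r i)^-1) *m Z + realdiag e.
exists J; split.
  apply: unitaryP; rewrite /J adjD adj_mul !adj_realdiag Z_herm.
  rewrite mulmxDl !mulmxDr -!mulmxA ZE mulmx0 addr0 !mulmxA EZ mul0mx add0r.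
  rewrite -(mulmxA _ Z Z) ZZ !mulmxA !realdiag_mul realdiag_add -realdiag1.
  congr realdiag; apply/funext => i; rewrite /e.
  have [ri0|ri_neq0] := eqVneq (r i) 0; first by rewrite ri0 invr0 !mul0r add0r mulr1.
  by rewrite mulr0 addr0 mulVf // mul1r mulfV.
rewrite /J mulmxDl mxtraceD -mulmxA ZZ EZ mxtrace0 addr0 !realdiag_mul mxtrace_realdiag.
apply: congr1; apply: eq_bigr => i _.
have [->|ri_neq0] := eqVneq (r i) 0; first by rewrite !mul0r mulr0.
by rewrite mulKf.
Qed.

Lemma psd_sqrt_diagonalize n (X S : 'M[C]_n) : psd S -> S *m S = adj X *m X ->
  exists V r, [/\ unitary V, forall i, 0 <= r i, \tr S = (\sum_i r i)%:C &
    adj (V *m X *m adj V) *m (V *m X *m adj V) = realdiag r *m realdiag r].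
Proof.
move=> /psd_diagonalize[V [r [[V1 V2] r_ge0 SE]]] SS; exists V, r; split => //.
  by rewrite SE mxtrace_conj // mxtrace_realdiag.
rewrite !adj_mul adjK (mulmxA V) (mulmx_conj _ _ V2) -SS SE.
by rewrite (mulmx_conj _ _ V1) !mulmxA V1 mul1mx -mulmxA V1 mulmx1.
Qed.

Lemma norm_tr_unitary_le n (W X S : 'M[C]_n) :
  unitary W -> psd S -> S *m S = adj X *m X -> `|\tr (W *m X)| <= \tr S.
Proof.
move=> W_unitary /psd_sqrt_diagonalize/[apply] -[V [r [V_unitary r_ge0 -> ZZ]]].
have [VW_unitary _] := unitary_mul (unitary_mul V_unitary W_unitary) (unitary_adj V_unitary).
rewrite -(mxtrace_conj _ V_unitary.2) -(mulmx_conj _ _ V_unitary.2).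
exact: norm_tr_mul_le_diag VW_unitary ZZ r_ge0.
Qed.

Lemma tr_unitary_attained n (X S : 'M[C]_n) : adj X = X ->
  psd S -> S *m S = adj X *m X -> exists J, unitary J /\ \tr (J *m X) = \tr S.
Proof.
move=> X_herm /psd_sqrt_diagonalize/[apply] -[V [r [V_unitary r_ge0 -> ZZ]]].
have Z_herm : adj (V *m X *m adj V) = V *m X *m adj V by rewrite !adj_mul adjK X_herm mulmxA.
rewrite Z_herm in ZZ; have [J [J_unitary <-]] := tr_mul_attained_diag Z_herm ZZ r_ge0.
exists (adj V *m J *m V); split.
  exact: unitary_mul (unitary_mul (unitary_adj V_unitary) J_unitary) V_unitary.
by rewrite mxtrace_mulC !mulmxA -mulmxA mxtrace_mulC !mulmxA.
Qed.

End TraceNorm.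

Section TraceDistance.
Variable R : realType.
Local Notation C := R[i].

Lemma Re_tr_le_trdist n (A B W : 'M[C]_n) :
  unitary W -> Re (\tr (W *m (A - B))) <= trdist A B.
Proof.
move=> W_unitary; have [S_psd SS] := mabs_psd_sqrt (A - B).
exact/Re_le_norm/(norm_tr_unitary_le W_unitary S_psd SS).
Qed.

Lemma trdist_attained n (A B : 'M[C]_n) : adj A = A -> adj B = B ->
  exists J, unitary J /\ trdist A B = Re (\tr (J *m (A - B))).
Proof.
move=> A_herm B_herm; have [S_psd SS] := mabs_psd_sqrt (A - B).
have [|J [J_unitary trJ]] := tr_unitary_attained _ S_psd SS; first by rewrite adjB A_herm B_herm.
by exists J; rewrite /trdist trJ.
Qed.

End TraceDistance.

Section Mixture.
Variable R : realType.
Local Notation C := R[i].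

Lemma Re_realM (r : R) (z : C) : Re (r%:C * z) = r * Re z.
Proof. by case: z => a b /=; rewrite mul0r subr0. Qed.

Lemma cdotDl n (x y z : 'cV[C]_n) : cdot (x + y) z = cdot x z + cdot y z.
Proof. by rewrite /cdot adjD mulmxDl mxE. Qed.

Lemma cdotDr n (x y z : 'cV[C]_n) : cdot x (y + z) = cdot x y + cdot x z.
Proof. by rewrite /cdot mulmxDr mxE. Qed.

Lemma cdot_sumZl n (I : finType) (c : I -> R) (x : I -> 'cV[C]_n) y :
  cdot (\sum_i (c i)%:C *: x i) y = \sum_i (c i)%:C * cdot (x i) y.
Proof.
rewrite /cdot adj_sum mulmx_suml summxE; apply: eq_bigr => i _.
by rewrite adj_realZ -scalemxAl mxE.
Qed.

Lemma cdot_sumZr n (I : finType) (c : I -> C) x (y : I -> 'cV[C]_n) :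
  cdot x (\sum_i c i *: y i) = \sum_i c i * cdot x (y i).
Proof.
by rewrite /cdot mulmx_sumr summxE; apply: eq_bigr => i _; rewrite -scalemxAr mxE.
Qed.

Lemma mxtrace_mul_rank1 n (A : 'M[C]_n) (x y : 'cV[C]_n) :
  \tr (A *m (x *m adj y)) = cdot y (A *m x).
Proof. by rewrite mulmxA mxtrace_mulC trace_mx11. Qed.

Lemma tr_mixture_sub_pure n (Omega : finType) (p : Omega -> R)
    (J U0 rho0 : 'M[C]_n) (U : Omega -> 'M[C]_n) (psi : 'cV[C]_n) :
  \tr (J *m (\sum_w (p w)%:C *: (U w *m rho0 *m adj (U w))
             - U0 *m (psi *m adj psi) *m adj U0)) =
  \sum_w (p w)%:C * \tr (adj (U w) *m J *m U w *m (rho0 - psi *m adj psi))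
  + (\sum_w (p w)%:C * cdot (U w *m psi) (J *m (U w *m psi))
     - cdot (U0 *m psi) (J *m (U0 *m psi))).
Proof.
have pure_conj M : M *m (psi *m adj psi) *m adj M = M *m psi *m adj (M *m psi).
  by rewrite adj_mul !mulmxA.
rewrite mulmxBr raddfB /= pure_conj mxtrace_mul_rank1 addrA; congr (_ - _).
rewrite mulmx_sumr raddf_sum -big_split /=; apply: eq_bigr => w _.
rewrite -scalemxAr mxtraceZ -mulrDr -mxtrace_mul_rank1 -pure_conj; congr (_ * _).
have -> : \tr (adj (U w) *m J *m U w *m (rho0 - psi *m adj psi))
    = \tr (J *m (U w *m (rho0 - psi *m adj psi) *m adj (U w))).
  by rewrite -!mulmxA mxtrace_mulC -!mulmxA.
by rewrite -mxtraceD -mulmxDr -mulmxDl -mulmxDr subrK.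
Qed.

Section Weights.
Variables (Omega : finType) (p : Omega -> R).
Hypotheses (p_ge0 : forall w, 0 <= p w) (p_sum : \sum_w p w = 1).

Lemma Re_mixture_tr_le_trdist n (V : Omega -> 'M[C]_n) (A B : 'M[C]_n) :
  (forall w, unitary (V w)) ->
  Re (\sum_w (p w)%:C * \tr (V w *m (A - B))) <= trdist A B.
Proof.
move=> V_unitary; rewrite raddf_sum /=.
under eq_bigr => w _ do rewrite Re_realM.
rewrite -[trdist A B]mul1r -p_sum mulr_suml; apply: ler_sum => w _.
exact/ler_wpM2l/Re_tr_le_trdist.
Qed.

Lemma cdot_mixture_expand n (J : 'M[C]_n) (a : 'cV[C]_n) (b : Omega -> 'cV[C]_n) :
  \sum_w (p w)%:C * cdot (a + b w) (J *m (a + b w)) - cdot a (J *m a) =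
  cdot (\sum_w (p w)%:C *: b w) (J *m a) + cdot a (J *m \sum_w (p w)%:C *: b w)
  + \sum_w (p w)%:C * cdot (b w) (J *m b w).
Proof.
have -> : J *m \sum_w (p w)%:C *: b w = \sum_w (p w)%:C *: (J *m b w).
  by rewrite mulmx_sumr; apply: eq_bigr => w _; rewrite -scalemxAr.
rewrite cdot_sumZl cdot_sumZr.
under eq_bigr => w _ do rewrite mulmxDr cdotDl !cdotDr !mulrDr.
rewrite !big_split /= -mulr_suml -rmorph_sum p_sum mul1r; ring.
Qed.

Lemma Re_mixture_cdot_le n (J : 'M[C]_n) (a : 'cV[C]_n) (b : Omega -> 'cV[C]_n) :
  adj J *m J = 1%:M -> vnorm a = 1 ->
  Re (\sum_w (p w)%:C * cdot (a + b w) (J *m (a + b w)) - cdot a (J *m a))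
  <= 2 * vnorm (\sum_w (p w)%:C *: b w) + \sum_w p w * vnorm (b w) ^+ 2.
Proof.
move=> JJ a1; rewrite cdot_mixture_expand !raddfD /= [Re (\sum_w _)]raddf_sum /=.
rewrite mulr_natl mulr2n; apply: lerD; first apply: lerD.
- by apply: (le_trans (Re_cdot_unitary_le _ _ JJ)); rewrite a1 mulr1.
- by apply: (le_trans (Re_cdot_unitary_le _ _ JJ)); rewrite a1 mul1r.
- apply: ler_sum => w _; rewrite Re_realM; apply: ler_wpM2l => //.
  by apply: (le_trans (Re_cdot_unitary_le _ _ JJ)); rewrite expr2.
Qed.

Lemma Re_mixture_pure_le n (J U0 : 'M[C]_n) (U : Omega -> 'M[C]_n) (psi : 'cV[C]_n) :
  unitary J -> unitary U0 -> vnorm psi = 1 ->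
  Re (\sum_w (p w)%:C * cdot (U w *m psi) (J *m (U w *m psi))
      - cdot (U0 *m psi) (J *m (U0 *m psi)))
  <= 2 * opnorm (\sum_w (p w)%:C *: U w - U0) + \sum_w p w * opnorm (U w - U0) ^+ 2.
Proof.
move=> J_unitary U0_unitary psi1; pose b w := (U w - U0) *m psi.
have -> : \sum_w (p w)%:C * cdot (U w *m psi) (J *m (U w *m psi))
    = \sum_w (p w)%:C * cdot (U0 *m psi + b w) (J *m (U0 *m psi + b w)).
  by apply: eq_bigr => w _; rewrite /b mulmxBl addrC subrK.
have b_mean : \sum_w (p w)%:C *: b w = (\sum_w (p w)%:C *: U w - U0) *m psi.
  rewrite mulmxBl mulmx_suml /b.
  under eq_bigr => w _ do rewrite mulmxBl scalerBr scalemxAl.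
  by rewrite sumrB -scaler_suml -rmorph_sum p_sum scale1r.
apply: (le_trans (Re_mixture_cdot_le b J_unitary.2 _)).
  by rewrite vnorm_unitary // U0_unitary.2.
rewrite b_mean; apply: lerD; first by rewrite ler_pM2l // opnorm_ub.
apply: ler_sum => w _; rewrite ler_wpM2l // lerXn2r ?nnegrE ?vnorm_ge0 ?opnorm_ub //.
exact: le_trans (vnorm_ge0 _) (opnorm_ub _ psi1).
Qed.

End Weights.
End Mixture.

Theorem lemma1 (R : realType) (n : nat) (Omega : finType)
  (p : Omega -> R) (U0 : 'M[R[i]]_n) (U : Omega -> 'M[R[i]]_n)
  (psi0 : 'cV[R[i]]_n) (rho0 : 'M[R[i]]_n) :
  (forall w, 0 <= p w) -> \sum_w p w = 1 ->
  unitary U0 -> (forall w, unitary (U w)) ->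
  vnorm psi0 = 1 -> density rho0 ->
  let rho := \sum_w (p w)%:C *: (U w *m rho0 *m adj (U w)) in
  let sigma := U0 *m (psi0 *m adj psi0) *m adj U0 in
  trdist rho sigma <=
    trdist rho0 (psi0 *m adj psi0)
    + 2 * opnorm (\sum_w (p w)%:C *: U w - U0)
    + \sum_w p w * opnorm (U w - U0) ^+ 2.
Proof.
move=> p_ge0 p_sum U0_unitary U_unitary psi1 [[rho0_herm _] _]; cbv zeta.
set rho := \sum_w _; set sigma := U0 *m _ *m adj U0.
have rho_herm : adj rho = rho.
  rewrite adj_sum; apply: eq_bigr => w _.
  by rewrite adj_realZ !adj_mul adjK rho0_herm mulmxA.
have sigma_herm : adj sigma = sigma by rewrite !adj_mul !adjK mulmxA.
have [J [J_unitary ->]] := trdist_attained rho_herm sigma_herm.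
rewrite tr_mixture_sub_pure raddfD -addrA; apply: lerD.
  apply: Re_mixture_tr_le_trdist => // w.
  exact: unitary_mul (unitary_mul (unitary_adj (U_unitary w)) J_unitary) (U_unitary w).
exact: Re_mixture_pure_le.
Qed.
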